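(* For every constant $c\ge 1$ there exist graphs $G$ (with arbitrarily large number of vertices $n$) such that the following spanning-tree sampling procedure requires $\rho=\Omega(\log n)$ rounds in order to approximate all cuts of $G$ within a factor $c$ with constant probability: compute the effective conductance $c_e$ of every edge; start with $E'=\emptyset$, $w\equiv 0$; for each of $\rho$ rounds, independently pick a uniformly random spanning tree $T$ of $G$, and for each edge $e\in T$ add $e$ to $E'$ and increase $w_e$ by $c_e/\rho$. That is, if $\rho=o(\log n)$ then with probability bounded below by a positive constant there is a set $S\subseteq V$ with $w(\delta(S))$ and $|\delta(S)|$ differing by more than a factor $c$.
   Context: Graphs here may have parallel edges (unit weight per copy). $\delta(S)$ is the set of edges with exactly one endpoint in $S$. The effective conductance $c_e$ of an edge $e=st$ is the current flowing from $s$ to $t$ when every edge is a unit resistor and a unit voltage difference is imposed between $s$ and $t$. *)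

From HB Require Import structures.
From mathcomp Require Import all_boot all_order all_algebra.
From mathcomp Require Import reals exp.
Set Implicit Arguments. Unset Strict Implicit. Unset Printing Implicit Defensive.
Import Order.TTheory GRing.Theory Num.Theory.
Local Open Scope ring_scope.

(* A multigraph: vertex type V, edge type E (parallel edges = distinct
   elements of E with the same endpoints), [ends e = (x, y)]. *)
Section MultiGraph.
Variables (V E : finType) (ends : E -> V * V).

Definition loopless : Prop := forall e, (ends e).1 != (ends e).2.

Definition adj (F : {set E}) : rel V := fun x y =>
  [exists e in F, (ends e == (x, y)) || (ends e == (y, x))].

Definition connected_on (F : {set E}) : bool :=
  [forall x, [forall y, connect (adj F) x y]].

(* spanning tree: connected spanning edge set which is acyclic, i.e. every
   edge is a bridge (removing it disconnects its endpoints). *)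
Definition spanning_tree (T : {set E}) : bool :=
  connected_on T &&
  [forall e in T, ~~ connect (adj (T :\ e)) (ends e).1 (ends e).2].

Definition cut (S : {set V}) : {set E} :=
  [set e | ((ends e).1 \in S) != ((ends e).2 \in S)].

Variable R : realType.

(* net current leaving v for potential phi, every edge a unit resistor *)
Definition net_current (phi : V -> R) (v : V) : R :=
  \sum_(e | (ends e).1 == v) (phi v - phi (ends e).2) +
  \sum_(e | (ends e).2 == v) (phi v - phi (ends e).1).

Definition unit_potential (phi : V -> R) (s t : V) : Prop :=
  phi s = 1 /\ phi t = 0 /\
  forall v, v != s -> v != t -> net_current phi v = 0.

Definition sampled_weight (c : E -> R) (rho : nat)
  (Ts : {ffun 'I_rho -> {set E}}) (e : E) : R :=
  c e / rho%:R * #|[set i | e \in Ts i]|%:R.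

Definition bad_sample (c : E -> R) (cf : R) (rho : nat)
  (Ts : {ffun 'I_rho -> {set E}}) : bool :=
  [exists S : {set V},
     let W := \sum_(e in cut S) sampled_weight c Ts e in
     let k := #|cut S|%:R in
     (cf * k < W) || (W * cf < k)].

(* probability (rho independent uniform spanning trees) of a bad sample *)
Definition failure_prob (c : E -> R) (cf : R) (rho : nat) : R :=
  #|[set Ts : {ffun 'I_rho -> {set E}} |
       [forall i, spanning_tree (Ts i)] && bad_sample c cf Ts]|%:R /
  (#|[set T | spanning_tree T]| ^ rho)%:R.

End MultiGraph.

From HB Require Import structures.
From mathcomp Require Import all_boot all_order all_algebra.
From mathcomp Require Import reals exp.
From mathcomp Require Import zify ring lra.
Set Implicit Arguments. Unset Strict Implicit. Unset Printing Implicit Defensive.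
Import Order.TTheory GRing.Theory Num.Theory.

(* The graphs are flowers: a hub joined to M petals, each petal a triangle
   whose rim edge, opposite the hub, has B > 2 cf parallel copies.  A spanning
   tree chooses a spanning tree of every petal independently, one of the 2B + 1
   choices being the two spokes.  In a unit potential across a spoke, every other
   petal stays at potential 1 and the rim vertex of the spoke's own petal is
   strictly positive, so the spoke has effective conductance below 2.  Hence if
   some petal receives its two spokes in all rho rounds, the cut isolating the
   far end of a spoke has weight below 2 but more than B edges.  This happens
   with probability 1 - (1 - 1/K)^M >= 1/2 when K = (2B + 1)^rho <= M, and
   rho <= alpha ln n ensures K <= M. *)

Lemma card_preim_bij (aT rT : finType) (f : aT -> rT) (P : pred rT) :
  bijective f -> #|[set x | P (f x)]| = #|[set y | P y]|.
Proof.
move=> fbij; rewrite -(on_card_preimset (onW_bij [set y | P y] fbij)).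
by apply: eq_card => x; rewrite !inE.
Qed.

Lemma card_ffun_in (I Y : finType) (Q : {set Y}) :
  #|[set g : {ffun I -> Y} | [forall i, g i \in Q]]| = #|Q| ^ #|I|.
Proof.
by rewrite -card_ffun_on; apply: eq_card => g; rewrite inE; apply/forallP/ffun_onP.
Qed.

Lemma card_ffun_in_hitting (I Y : finType) (Q : {set Y}) y : y \in Q ->
  #|[set g : {ffun I -> Y} | [forall i, g i \in Q] && [exists i, g i == y]]| =
  #|Q| ^ #|I| - #|Q|.-1 ^ #|I|.
Proof.
move=> yQ.
have -> : [set g : {ffun I -> Y} | [forall i, g i \in Q] && [exists i, g i == y]] =
    [set g : {ffun I -> Y} | [forall i, g i \in Q]] :\:
    [set g : {ffun I -> Y} | [forall i, g i \in Q :\ y]].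
  apply/setP => g; rewrite !inE [RHS]andbC; apply: andb_id2l => /forallP gQ.
  by rewrite negb_forall; apply: eq_existsb => i; rewrite !inE gQ andbT negbK.
rewrite cardsD (setIidPr _) ?card_ffun_in; last first.
  apply/subsetP => g; rewrite !inE => /forallP gQy; apply/forallP => i.
  by have /setD1P [] := gQy i.
by rewrite [in #|Q|.-1](cardsD1 y Q) yQ add1n.
Qed.

Lemma bernoulli_expn a n : a ^ n * (a + n) <= a * (a + 1) ^ n.
Proof.
elim: n => [|n IHn]; first by rewrite !expn0 muln1 mul1n addn0.
rewrite !expnS; have step : a * (a + n.+1) <= (a + 1) * (a + n) by nia.
by have := leq_mul (leqnn (a + 1)) IHn; have := leq_mul (leqnn (a ^ n)) step; nia.
Qed.

Lemma double_expn_pred_le K M : 0 < K <= M -> 2 * K.-1 ^ M <= K ^ M.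
Proof.
case/andP => K_gt0 KM; set a := K.-1; have Ka : K = a + 1 by rewrite addn1 prednK.
rewrite Ka -(subnK KM) Ka (expnD a) (expnD (a + 1)).
have le_pow e : a ^ e <= (a + 1) ^ e.
  by elim: e => // e IHe; rewrite !expnS leq_mul // leq_addr.
suff : 2 * a ^ (a + 1) <= (a + 1) ^ (a + 1).
  by move=> double_le; rewrite mulnCA leq_mul ?le_pow.
case: (posnP a) => [-> // | a_gt0].
rewrite -(leq_pmul2l a_gt0); apply: leq_trans (bernoulli_expn a (a + 1)); nia.
Qed.

Section GraphFacts.
Variables (V E : finType) (ends : E -> V * V).

Lemma adj_sym (F : {set E}) : symmetric (adj ends F).
Proof. by move=> x y; apply: eq_existsb => e; rewrite orbC. Qed.

Lemma connect_ends (F : {set E}) e :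
  e \in F -> connect (adj ends F) (ends e).1 (ends e).2.
Proof.
by move=> eF; apply: connect1; apply/existsP; exists e; rewrite eF -surjective_pairing eqxx.
Qed.

Lemma connect_ends_sym (F : {set E}) e :
  e \in F -> connect (adj ends F) (ends e).2 (ends e).1.
Proof. by move=> eF; rewrite (sym_connect_sym (@adj_sym F)); exact: connect_ends. Qed.

Lemma not_connect_across (F : {set E}) (A : pred V) x y :
  (forall e, e \in F -> A (ends e).1 = A (ends e).2) -> A x != A y ->
  ~~ connect (adj ends F) x y.
Proof.
move=> sideF; apply: contra => xy; apply/eqP; apply: (closed_connect _ xy).
by move=> u v /existsP [e /andP [eF /orP [] /eqP ends_e]];
  have := sideF e eF; rewrite ends_e.
Qed.

Lemma spanning_tree_connect (T : {set E}) x y :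
  spanning_tree ends T -> connect (adj ends T) x y.
Proof. by case/andP => /forallP /(_ x) /forallP /(_ y). Qed.

Lemma spanning_tree_bridge (T : {set E}) e : spanning_tree ends T -> e \in T ->
  ~~ connect (adj ends (T :\ e)) (ends e).1 (ends e).2.
Proof. by case/andP => _ /forallP /(_ e) /implyP; apply. Qed.

Lemma connected_on_setT (T : {set E}) :
  connected_on ends T -> connected_on ends [set: E].
Proof.
move=> /forallP conT; apply/forallP => x; apply/forallP => y.
have /forallP /(_ y) := conT x; apply: connect_sub => u v /existsP [e /andP [_ ends_e]].
by apply: connect1; apply/existsP; exists e; rewrite in_setT.
Qed.

Variable R : realType.
Local Open Scope ring_scope.

Lemma failure_probE (c : E -> R) cf rho :
  failure_prob ends c cf rho =
  #|[set Ts : {ffun 'I_rho -> {set E}} |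
       [forall r, spanning_tree ends (Ts r)] && bad_sample ends c cf Ts]|%:R /
  #|[set Ts : {ffun 'I_rho -> {set E}} | [forall r, spanning_tree ends (Ts r)]]|%:R.
Proof.
rewrite /failure_prob -[in X in _ / X%:R](card_ord rho) -card_ffun_in.
by congr (_ / _%:R); apply: eq_card => Ts; rewrite !inE; apply: eq_forallb => r; rewrite inE.
Qed.

Lemma sampled_weight_always (c : E -> R) rho (Ts : {ffun 'I_rho -> {set E}}) e :
  (0 < rho)%N -> (forall r, e \in Ts r) -> sampled_weight c Ts e = c e.
Proof.
move=> rho_gt0 eTs; rewrite /sampled_weight.
have -> : [set r | e \in Ts r] = setT by apply/setP => r; rewrite !inE eTs.
by rewrite cardsT card_ord divfK // pnatr_eq0 -lt0n.
Qed.

Lemma sampled_weight_never (c : E -> R) rho (Ts : {ffun 'I_rho -> {set E}}) e :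
  (forall r, e \notin Ts r) -> sampled_weight c Ts e = 0.
Proof.
move=> eTs; rewrite /sampled_weight.
have -> : [set r | e \in Ts r] = set0 by apply/setP => r; rewrite !inE (negbTE (eTs r)).
by rewrite cards0 mulr0.
Qed.

End GraphFacts.

Section Flower.
Variables (M B : nat).

(* The hub is [None]; petal [i] has the vertices [Some (i, false)] and
   [Some (i, true)], the spokes [(i, inl s)] from the hub to [Some (i, s)], and
   the [B] parallel rim edges [(i, inr k)] between its two vertices. *)
Definition petal_edge : finType := (bool + 'I_B)%type.
Definition flower_vertex : finType := option ('I_M * bool).
Definition flower_edge : finType := ('I_M * petal_edge)%type.

Definition flower_ends (e : flower_edge) : flower_vertex * flower_vertex :=
  match e with
  | (i, inl s) => (None, Some (i, s))
  | (i, inr _) => (Some (i, false), Some (i, true))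
  end.

Local Notation adjF := (adj flower_ends).

Lemma SomeE (a b : 'I_M * bool) : (Some a == Some b :> flower_vertex) = (a == b).
Proof. by []. Qed.

Definition petal (i : 'I_M) (T : {set flower_edge}) : {set petal_edge} :=
  [set x | (i, x) \in T].

Lemma in_petal i x T : (x \in petal i T) = ((i, x) \in T).
Proof. by rewrite inE. Qed.

Lemma petal_setD1 i x T : petal i (T :\ (i, x)) = petal i T :\ x.
Proof. by apply/setP => y; rewrite !inE xpair_eqE eqxx. Qed.

Definition petal_part (i : 'I_M) (P : pred bool) : pred flower_vertex :=
  fun v => if v is Some (j, s) then (j == i) && P s else false.

Lemma petal_separated i (P : pred bool) F x y :
  (forall s, inl s \in petal i F -> ~~ P s) ->
  (forall k, inr k \in petal i F -> P false = P true) ->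
  petal_part i P x != petal_part i P y -> ~~ connect (adjF F) x y.
Proof.
move=> spokeF rimF; apply: not_connect_across => -[j [s|k]] eF /=;
  case: eqVneq => [ji|] //=; subst j.
- by rewrite (negbTE (spokeF s _)) // inE.
- by apply: (rimF k); rewrite inE.
Qed.

Definition spokes : {set petal_edge} := [set inl false; inl true].

Definition petal_tree (A : {set petal_edge}) : bool :=
  (A == spokes) || [exists s, exists k, A == [set inl s; inr k]].

Lemma petal_trees_spanning T :
  (forall i, petal_tree (petal i T)) -> spanning_tree flower_ends T.
Proof.
move=> treeT.
have hub v : connect (adjF T) None v.
  case: v => [[i s]|]; last exact: connect0.
  case/orP: (treeT i) => [/eqP Ti | /existsP [s0 /existsP [k /eqP Ti]]].
    have sT : (i, inl s) \in T by rewrite -in_petal Ti !inE; case: s.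
    exact: connect_ends sT.
  have spoke0 : connect (adjF T) None (Some (i, s0)).
    have s0T : (i, inl s0) \in T by rewrite -in_petal Ti !inE eqxx.
    exact: connect_ends s0T.
  have [-> // | ss0] := eqVneq s s0.
  have rimT : (i, inr k) \in T by rewrite -in_petal Ti !inE eqxx orbT.
  apply: connect_trans spoke0 _.
  case: s s0 ss0 {Ti} => -[] //= _.
  - exact: (@connect_ends _ _ flower_ends T (i, inr k) rimT).
  - exact: (@connect_ends_sym _ _ flower_ends T (i, inr k) rimT).
apply/andP; split.
  apply/forallP => x; apply/forallP => y; apply: connect_trans (hub y).
  by rewrite (sym_connect_sym (@adj_sym _ _ _ T)).
apply/forallP => -[i x]; apply/implyP; rewrite -in_petal.
case/orP: (treeT i) => [/eqP Ti | /existsP [s /existsP [k /eqP Ti]]]; rewrite Ti.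
  case: x => [s|k]; rewrite !inE //= => _.
  by apply: (petal_separated (i := i) (P := pred1 s)) => [s'|k|];
      rewrite ?petal_setD1 ?Ti ?inE /= ?eqxx //; case: s' s => -[].
case: x => [s'|k']; rewrite !inE.
  case/orP => [/eqP [->] | //].
  apply: (petal_separated (i := i) (P := predT)) => [s''|k''|];
    rewrite ?petal_setD1 ?Ti ?inE /= ?eqxx //=.
  by case: eqP.
move=> /eqP [->].
apply: (petal_separated (i := i) (P := pred1 (~~ s))) => [s''|k''|];
  rewrite ?petal_setD1 ?Ti ?inE /= ?eqxx //=.
- by case/orP => [/eqP [->] | //]; case: s in Ti *.
- by case: eqP.
- by case: s in Ti *.
Qed.

Section PetalOfSpanningTree.
Variables (T : {set flower_edge}) (i : 'I_M).
Hypothesis treeT : spanning_tree flower_ends T.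

Lemma petal_has_spoke : exists s, inl s \in petal i T.
Proof.
case: (boolP (inl false \in petal i T)) => [|nf]; first by exists false.
case: (boolP (inl true \in petal i T)) => [|nt]; first by exists true.
exfalso; move: (spanning_tree_connect None (Some (i, false)) treeT); apply/negP.
by apply: (petal_separated (i := i) (P := predT)) => [[]|//|] /=;
  rewrite ?(negbTE nf) ?(negbTE nt) ?eqxx.
Qed.

Lemma petal_rim_unique k k' : inr k \in petal i T -> inr k' \in petal i T -> k' = k.
Proof.
rewrite !in_petal => kT k'T; apply/eqP.
apply: contraNT (spanning_tree_bridge treeT kT) => k'k /=.
have k'Tk : (i, inr k') \in T :\ (i, inr k).
  by rewrite 2!inE k'T andbT; apply: contra k'k => /eqP [->].
exact: (@connect_ends _ _ flower_ends _ _ k'Tk).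
Qed.

Lemma petal_no_rim_with_spokes k :
  inl false \in petal i T -> inl true \in petal i T -> inr k \notin petal i T.
Proof.
rewrite !in_petal => fT tT; apply/negP => kT.
move/negP: (spanning_tree_bridge treeT kT); apply => /=.
have fTk : (i, inl false) \in T :\ (i, inr k) by rewrite !inE xpair_eqE andbF fT.
have tTk : (i, inl true) \in T :\ (i, inr k) by rewrite !inE xpair_eqE andbF tT.
exact: connect_trans (@connect_ends_sym _ _ flower_ends _ _ fTk)
                     (@connect_ends _ _ flower_ends _ _ tTk).
Qed.

Lemma petal_rim_with_one_spoke s :
  inl s \in petal i T -> inl (~~ s) \notin petal i T -> exists k, inr k \in petal i T.
Proof.
move=> sT nsT; case: (pickP (fun k => inr k \in petal i T)) => [k kT | no_rim].
  by exists k.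
exfalso; move: (spanning_tree_connect None (Some (i, ~~ s)) treeT); apply/negP.
apply: (petal_separated (i := i) (P := pred1 (~~ s))) => [s'|k|] /=.
- by move=> s'T; apply: contraNneq nsT => <-.
- by rewrite no_rim.
- by rewrite !eqxx.
Qed.

Lemma spanning_petal_tree : petal_tree (petal i T).
Proof.
have [s sT] := petal_has_spoke.
have [nsT | nsT] := boolP (inl (~~ s) \in petal i T).
  have spokeT b : inl b \in petal i T by case: b; case: s sT nsT.
  apply/orP; left; apply/eqP/setP => -[s'|k]; rewrite in_set2.
    by rewrite spokeT; case: s'.
  by rewrite (negbTE (petal_no_rim_with_spokes k (spokeT _) (spokeT _))).
have [k kT] := petal_rim_with_one_spoke sT nsT.
apply/orP; right; apply/existsP; exists s; apply/existsP; exists k.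
apply/eqP/setP => -[s'|k']; rewrite in_set2.
  have [-> | ns's] := eqVneq s' s; first by rewrite sT eqxx.
  have -> : s' = ~~ s by case: s s' ns's {sT nsT} => -[].
  by rewrite (negbTE nsT); case: s {sT nsT ns's}.
apply/idP/idP => [/(petal_rim_unique kT) -> | /orP [//| /eqP [->]]].
  by rewrite eqxx orbT.
exact: kT.
Qed.

End PetalOfSpanningTree.

Section Potential.
Variable R : realType.
Local Open Scope ring_scope.
Implicit Type phi : flower_vertex -> R.

Lemma big_flower_edge (P : pred flower_edge) (F : flower_edge -> R) :
  \sum_(e | P e) F e =
  \sum_j (\sum_(s | P (j, inl s)) F (j, inl s) + \sum_(k | P (j, inr k)) F (j, inr k)).
Proof.
rewrite big_mkcond.
transitivity (\sum_j \sum_x (if P (j, x) then F (j, x) else 0)).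
  by rewrite pair_bigA; apply: eq_bigr => -[j x].
by apply: eq_bigr => j _; rewrite big_sumType /= !(big_mkcond (fun _ => P _)).
Qed.

Lemma net_current_petal phi i s :
  net_current flower_ends phi (Some (i, s)) =
  phi (Some (i, s)) - phi None + B%:R * (phi (Some (i, s)) - phi (Some (i, ~~ s))).
Proof.
rewrite /net_current !big_flower_edge (bigD1 i) //= [X in _ + X](bigD1 i) //=.
rewrite [\sum_(j < M | j != i) _]big1 => [|j ji]; last first.
  by rewrite !big1 ?addr0 // => x; rewrite SomeE xpair_eqE (negbTE ji).
rewrite [\sum_(j < M | j != i) _]big1 => [|j ji]; last first.
  by rewrite !big1 ?addr0 // => x; rewrite SomeE xpair_eqE (negbTE ji).
rewrite !addr0 !SomeE !xpair_eqE !eqxx /= big_pred0 => [|//].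
rewrite (big_pred1 s) => [|s0]; last by rewrite SomeE xpair_eqE eqxx.
by case: s => /=; rewrite ?big_pred0_eq sumr_const card_ord mulr_natl; ring.
Qed.
Lemma net_current_hub phi :
  net_current flower_ends phi None = \sum_j \sum_s (phi None - phi (Some (j, s))).
Proof.
rewrite /net_current !big_flower_edge /= [X in _ + X]big1 ?addr0 => [|j _].
  by apply: eq_bigr => j _; rewrite big_pred0_eq addr0.
by rewrite !big_pred0_eq addr0.
Qed.

Section UnitPotential.
Variables (phi : flower_vertex -> R) (i : 'I_M).
Hypothesis phi_unit : unit_potential flower_ends phi None (Some (i, false)).

Lemma potential_other_petal j :
  j != i -> phi (Some (j, false)) = 1 /\ phi (Some (j, true)) = 1.
Proof.
case: phi_unit => hub1 [_ harmonic] ji.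
have := harmonic (Some (j, false)) erefl; rewrite SomeE xpair_eqE (negbTE ji).
have := harmonic (Some (j, true)) erefl; rewrite SomeE xpair_eqE andbF.
rewrite !net_current_petal hub1 /= => /(_ isT) ht /(_ isT) hf.
have : (phi (Some (j, false)) - phi (Some (j, true))) * (1 + 2 * B%:R) = 0 by lra.
have B0 : 0 <= B%:R :> R by [].
move/eqP; rewrite mulf_eq0 => /orP [/eqP uw | /eqP]; last by lra.
split; lra.
Qed.

Lemma potential_rim_pos : 0 < phi (Some (i, true)).
Proof.
case: phi_unit => hub1 [hub0 harmonic].
have := harmonic (Some (i, true)) erefl; rewrite SomeE xpair_eqE andbF.
rewrite net_current_petal /= hub1 hub0 => /(_ isT).
have B0 : 0 <= B%:R :> R by [].
nra.
Qed.

Lemma spoke_conductance_lt2 : net_current flower_ends phi None < 2.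
Proof.
have rim_pos := potential_rim_pos; case: phi_unit => hub1 [hub0 _].
rewrite net_current_hub (bigD1 i) //= [\sum_(j < M | j != i) _]big1 ?addr0 => [|j ji];
  last first.
  by have [f1 t1] := potential_other_petal ji; rewrite big_bool /= f1 t1 hub1 subrr addr0.
rewrite big_bool /= hub1 hub0; lra.
Qed.

End UnitPotential.
End Potential.

Lemma card_flower_vertex : #|flower_vertex| = M.*2.+1.
Proof. by rewrite card_option card_prod card_ord card_bool muln2. Qed.

Lemma flower_loopless : loopless flower_ends.
Proof. by move=> -[j [s|k]] //=; rewrite SomeE xpair_eqE andbF. Qed.

Lemma spokes_petal_tree : petal_tree spokes.
Proof. by rewrite /petal_tree eqxx. Qed.

Lemma flower_connected : connected_on flower_ends [set: flower_edge].
Proof.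
have : spanning_tree flower_ends [set e | e.2 \in spokes].
  apply: petal_trees_spanning => i; rewrite (_ : petal i _ = spokes) ?spokes_petal_tree //.
  by apply/setP => x; rewrite !inE.
by case/andP => /connected_on_setT.
Qed.

Section Rounds.
Variable rho : nat.
Local Notation rounds := {ffun 'I_rho -> {set flower_edge}}.
Local Notation petal_rounds_type := {ffun 'I_M -> {ffun 'I_rho -> {set petal_edge}}}.

Definition petal_trees : {set {set petal_edge}} := [set A | petal_tree A].

Definition tree_rounds : {set {ffun 'I_rho -> {set petal_edge}}} :=
  [set h : {ffun 'I_rho -> {set petal_edge}} | [forall r, h r \in petal_trees]].

Definition spoke_rounds : {ffun 'I_rho -> {set petal_edge}} := [ffun=> spokes].

Definition petal_rounds (Ts : rounds) : petal_rounds_type :=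
  [ffun i => [ffun r => petal i (Ts r)]].

Lemma spoke_rounds_tree : spoke_rounds \in tree_rounds.
Proof. by rewrite inE; apply/forallP => r; rewrite ffunE inE spokes_petal_tree. Qed.

Lemma petal_rounds_bij : bijective petal_rounds.
Proof.
exists (fun G : petal_rounds_type =>
  [ffun r => [set e : flower_edge | e.2 \in G e.1 r]]).
  by move=> Ts; apply/ffunP => r; apply/setP => -[i x]; rewrite !(ffunE, inE).
by move=> G; apply/ffunP => i; apply/ffunP => r; apply/setP => x; rewrite !(ffunE, inE).
Qed.

Lemma petal_rounds_trees (Ts : rounds) :
  [forall r, spanning_tree flower_ends (Ts r)] =
  [forall i, petal_rounds Ts i \in tree_rounds].
Proof.
apply/forallP/forallP => [treeTs i | treeTs r].
  rewrite ffunE inE; apply/forallP => r.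
  by rewrite ffunE inE spanning_petal_tree.
apply: petal_trees_spanning => i.
by have := treeTs i; rewrite ffunE inE => /forallP /(_ r); rewrite ffunE inE.
Qed.

Lemma card_tree_rounds :
  #|[set Ts : rounds | [forall r, spanning_tree flower_ends (Ts r)]]| = #|tree_rounds| ^ M.
Proof.
under eq_finset => Ts do rewrite petal_rounds_trees.
by rewrite (card_preim_bij (fun G : petal_rounds_type => [forall i, G i \in tree_rounds])
  petal_rounds_bij) card_ffun_in card_ord.
Qed.

Lemma card_spoke_rounds :
  #|[set Ts : rounds | [forall r, spanning_tree flower_ends (Ts r)] &&
                       [exists i, [forall r, petal i (Ts r) == spokes]]]| =
  #|tree_rounds| ^ M - #|tree_rounds|.-1 ^ M.
Proof.
have spokesE (Ts : rounds) i :
    [forall r, petal i (Ts r) == spokes] = (petal_rounds Ts i == spoke_rounds).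
  apply/forallP/eqP => [spokesTs | /ffunP spokesTs r].
    by apply/ffunP => r; rewrite !ffunE; apply/eqP.
  by have := spokesTs r; rewrite !ffunE => ->.
under eq_finset => Ts do rewrite petal_rounds_trees (eq_existsb (spokesE Ts)).
by rewrite (card_preim_bij (fun G : petal_rounds_type =>
  [forall i, G i \in tree_rounds] && [exists i, G i == spoke_rounds]) petal_rounds_bij)
  card_ffun_in_hitting ?card_ord ?spoke_rounds_tree.
Qed.

Local Open Scope ring_scope.

Lemma bad_sample_spokes (R : realType) (c : flower_edge -> R) cf (Ts : rounds) i :
  (0 < rho)%N -> c (i, inl false) * cf < B%:R ->
  (forall r, petal i (Ts r) = spokes) -> bad_sample flower_ends c cf Ts.
Proof.
move=> rho_gt0 small_cut spokesTs.
have inTs r x : ((i, x) \in Ts r) = (x \in spokes) by rewrite -(spokesTs r) inE.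
set S := [set Some (i, false)].
have weight_cut : \sum_(e in cut flower_ends S) sampled_weight c Ts e = c (i, inl false).
  rewrite (bigD1 (i, inl false)) /=; last by rewrite !inE /= SomeE eqxx.
  rewrite big1 ?addr0 => [|e /andP [eS ne]].
    by apply: sampled_weight_always => // r; rewrite inTs !inE.
  apply: sampled_weight_never => r.
  move: eS ne; case: e => j [s|k]; rewrite !inE /= ?SomeE ?xpair_eqE;
    have [-> | ji] := eqVneq j i; rewrite ?eqxx ?(negbTE ji) //=.
  - by case: s.
  - by rewrite inTs !inE.
have size_cut : (B <= #|cut flower_ends S|)%N.
  have rim_inj : injective (fun k : 'I_B => (i, inr k) : flower_edge) by move=> k k' [].
  rewrite -[X in (X <= _)%N]card_ord -(card_imset _ rim_inj).
  apply: subset_leq_card; apply/subsetP => _ /imsetP [k _ ->].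
  by rewrite !inE /= !SomeE !xpair_eqE eqxx.
apply/existsP; exists S; rewrite /= weight_cut; apply/orP; right.
by apply: lt_le_trans small_cut _; rewrite ler_nat.
Qed.

Lemma flower_failure_prob_ge (R : realType) (c : flower_edge -> R) cf :
  (0 < rho)%N -> (forall i, c (i, inl false) * cf < B%:R) ->
  (#|tree_rounds| ^ M - #|tree_rounds|.-1 ^ M)%:R / (#|tree_rounds| ^ M)%:R <=
  failure_prob flower_ends c cf rho.
Proof.
move=> rho_gt0 small_cuts; rewrite failure_probE card_tree_rounds -card_spoke_rounds.
apply: ler_wpM2r; first by rewrite invr_ge0.
rewrite ler_nat; apply: subset_leq_card; apply/subsetP => Ts.
rewrite !inE => /andP [-> /existsP [i /forallP spokesTs]] /=.
exact: bad_sample_spokes (small_cuts i) (fun r => eqP (spokesTs r)).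
Qed.

End Rounds.
End Flower.

Local Open Scope ring_scope.

Lemma hit_ratio_ge_half (R : realFieldType) K M : (0 < K <= M)%N ->
  1 / 2 <= ((K ^ M - K.-1 ^ M)%:R / (K ^ M)%:R : R).
Proof.
move=> KM; have := double_expn_pred_le KM.
have pow_gt0 : (0 < K ^ M)%N by rewrite expn_gt0; case/andP: KM => ->.
move: pow_gt0; set X := (K.-1 ^ M)%N; set Y := (K ^ M)%N => Y_gt0 XY.
rewrite ler_pdivlMr ?ltr0n // natrB; last by lia.
by move: XY; rewrite -(ler_nat R) natrM; lra.
Qed.

Lemma expn_le_of_ln (R : realType) b n M : (2 <= b)%N -> (0 < n)%N ->
  n%:R <= (2 * ln (b%:R : R))^-1 * ln (M.*2.+1)%:R -> (b ^ n <= M)%N.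
Proof.
move=> b2 n_gt0 n_le.
have lnb_gt0 : 0 < ln (b%:R : R) by apply: ln_gt0; rewrite ltr1n.
have sq_le : ((b ^ n) ^ 2 <= M.*2.+1)%N.
  rewrite -expnM -(ler_nat R) -ler_ln ?posrE ?ltr0n ?expn_gt0; [|lia|by []].
  rewrite natrX lnXn ?ltr0n; last by lia.
  rewrite mulrC ler_pdivlMr ?mulr_gt0 // in n_le.
  by rewrite -[ln _ *+ _]mulr_natr natrM; lra.
have bn2 : (2 <= b ^ n)%N.
  by rewrite (leq_trans b2) // -{1}(expn1 b) leq_pexp2l // ltnW.
nia.
Qed.

Theorem lemma1p10 (R : realType) (cf : R) :
  1 <= cf ->
  exists alpha delta : R, 0 < alpha /\ 0 < delta /\
  forall N : nat,
    exists (V E : finType) (ends : E -> V * V),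
      (N <= #|V|)%N /\ loopless ends /\ connected_on ends [set: E] /\
      forall phi : E -> V -> R,
        (forall e, unit_potential ends (phi e) (ends e).1 (ends e).2) ->
        forall rho : nat, (0 < rho)%N ->
          rho%:R <= alpha * ln (#|V|%:R : R) ->
          delta <= failure_prob ends
                     (fun e => net_current ends (phi e) (ends e).1) cf rho.
Proof.
move=> cf_ge1.
pose B := (Num.truncn (2 * cf)).+1.
have B_gt : 2 * cf < B%:R by exact: truncnS_gt.
pose b := #|{set petal_edge B}|.
have b_ge2 : (2 <= b)%N.
  have set0T : (set0 : {set petal_edge B}) != setT.
    by apply/eqP => /setP /(_ (inl false)); rewrite !inE.
  by have := max_card (mem [set (set0 : {set petal_edge B}); setT]); rewrite cards2 set0T.
have lnb_gt0 : 0 < ln (b%:R : R) by apply: ln_gt0; rewrite ltr1n.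
exists (2 * ln (b%:R : R))^-1, (1 / 2); split; first by rewrite invr_gt0 mulr_gt0.
split=> [|N]; first by lra.
exists (flower_vertex N.+1), (flower_edge N.+1 B), (@flower_ends N.+1 B).
split; first by rewrite card_flower_vertex; lia.
split; first exact: flower_loopless.
split; first exact: flower_connected.
move=> phi phi_unit rho rho_gt0 rho_le.
set K := #|tree_rounds B rho|.
have K_gt0 : (0 < K)%N by apply/card_gt0P; exists (spoke_rounds B rho); exact: spoke_rounds_tree.
have K_le : (K <= N.+1)%N.
  apply: leq_trans (expn_le_of_ln b_ge2 rho_gt0 _).
    by rewrite /K /tree_rounds card_ffun_in card_ord leq_exp2r // max_card.
  by rewrite card_flower_vertex in rho_le; exact: rho_le.
have half_le : 1 / 2 <= ((K ^ N.+1 - K.-1 ^ N.+1)%N%:R / (K ^ N.+1)%N%:R : R).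
  by apply: hit_ratio_ge_half; rewrite K_gt0 K_le.
apply: le_trans half_le _; apply: flower_failure_prob_ge => // i.
by have := spoke_conductance_lt2 (phi_unit (i, inl false)); nra.
Qed.
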